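(* Let $n\ge4$, let $d$ be a distance function on the edges of the complete graph $K_n$, and let $H$ be a Hamiltonian cycle of $K_n$. Then the probability that one application of the vertex-based random solution generation with the matrix $\Pi^H$ outputs a Hamiltonian cycle whose cost is at most the cost of $H$ is $\Omega(1)$.
   Context: The cost of a Hamiltonian cycle is the sum of $d$ over its edges. For a Hamiltonian cycle $H$, $\Pi^H=(\pi_{i,j})$ is the symmetric $n\times n$ matrix with $\pi_{i,i}=0$, $\pi_{i,j}=1-\frac1n$ if $\{i,j\}\in H$ and $\pi_{i,j}=\frac{1}{n(n-2)}$ otherwise. Vertex-based generation from $\Pi$: pick a start vertex uniformly at random; while unvisited vertices remain, from the current vertex $v$ move to an unvisited vertex $v'$ with probability $\pi_{v,v'}/\sum_{j\text{ unvisited}}\pi_{v,j}$; output the resulting Hamiltonian cycle. Asymptotics are as $n\to\infty$, uniformly in $H$ and $d$. *)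

From HB Require Import structures.
From mathcomp Require Import all_boot all_order all_algebra all_fingroup.
Set Implicit Arguments. Unset Strict Implicit. Unset Printing Implicit Defensive.
Import Order.TTheory GRing.Theory Num.Theory.
Local Open Scope ring_scope.

(* Vertices of K_n are 'I_n; an edge {i,j} is the 2-element set [set i; j]. *)

Definition hc_edges n (s : 'S_n) : {set {set 'I_n}} :=
  [set [set s i; s (ordS i)] | i : 'I_n].

Definition is_hcycle n (H : {set {set 'I_n}}) : Prop :=
  exists s : 'S_n, H = hc_edges s.

Definition cost (R : numDomainType) n (d : {set 'I_n} -> R)
  (H : {set {set 'I_n}}) : R := \sum_(e in H) d e.

Definition PiH (R : fieldType) n (H : {set {set 'I_n}}) (i j : 'I_n) : R :=
  if i == j then 0
  else if [set i; j] \in H then 1 - (n%:R)^-1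
  else ((n * (n - 2))%N%:R)^-1.

Definition visited n (s : 'S_n) (k : 'I_n) : {set 'I_n} :=
  [set s m | m in [pred m : 'I_n | (m <= k)%N]].

(* Probability that vertex-based generation from Pi visits the vertices in
   the order s 0, s 1, ..., s (n-1): uniform start, then at step k move from
   s k to s (k+1) with probability Pi(s k, s(k+1)) / sum_{j unvisited} Pi(s k, j). *)
Definition gen_prob (R : fieldType) n (Pi : 'I_n -> 'I_n -> R) (s : 'S_n) : R :=
  (n%:R)^-1 *
  \prod_(k : 'I_n | (k.+1 < n)%N)
     (Pi (s k) (s (ordS k)) / \sum_(j in ~: visited s k) Pi (s k) j).

Definition good_prob (R : realFieldType) n (d : {set 'I_n} -> R)
  (H : {set {set 'I_n}}) : R :=
  \sum_(s : 'S_n | cost d (hc_edges s) <= cost d H) gen_prob (@PiH R n H) s.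

From HB Require Import structures.
From mathcomp Require Import all_boot all_order all_algebra all_fingroup.
From mathcomp Require Import zify ring lra.

Set Implicit Arguments.
Unset Strict Implicit.
Unset Printing Implicit Defensive.
Import Order.TTheory GRing.Theory Num.Theory.
Local Open Scope ring_scope.

(* Let H be traversed in the order s.  Composing s with the n cyclic shifts of
   the positions gives n visiting orders that all trace H, so it suffices that
   each is generated with probability at least 1/(6n).  At step k the move
   along H has weight c = 1 - 1/n, whereas the unvisited vertices carry weight
   at most c (1 + [k = 0]) + (n-k-1)/(n(n-2)): besides s (k+1), a cycle
   neighbour of s k is still unvisited only at the first step.  Hence step k
   succeeds with probability at least (1 - w_k)/(1 + [k = 0]), where
   w_k = (n-k-1)/((n-1)(n-2)), and the Weierstrass product inequality with
   sum_k w_k = n/(2(n-2)) <= 2/3 for n >= 8 bounds the product below by 1/6. *)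

Lemma prod_1subr_ge (R : realDomainType) (I : Type) (r : seq I) (P : pred I)
    (z : I -> R) :
  (forall i, P i -> 0 <= z i <= 1) ->
  1 - \sum_(i <- r | P i) z i <= \prod_(i <- r | P i) (1 - z i).
Proof.
move=> z01; elim: r => [|a r IH]; first by rewrite !big_nil subr0.
rewrite !big_cons; case: ifP => Pa //.
have /andP[za0 za1] := z01 a Pa.
have sum_ge0 : 0 <= \sum_(i <- r | P i) z i by apply: sumr_ge0 => i /z01/andP[].
have prod_ge0 : 0 <= \prod_(i <- r | P i) (1 - z i).
  by apply: prodr_ge0 => i /z01/andP[_]; rewrite subr_ge0.
nra.
Qed.

Lemma sum_ord_subS n : (\sum_(k < n | k.+1 < n) (n - k.+1) = 'C(n, 2))%N.
Proof.
rewrite big_mkcond -bin2_sum big_mkord [RHS](reindex_inj rev_ord_inj) /=.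
apply: eq_bigr => k _; case: ltnP => // n_le_k1.
by apply/esym/eqP; rewrite subn_eq0.
Qed.

Lemma prod_ord_first_double n : (1 < n)%N ->
  (\prod_(k < n | k.+1 < n) (k == 0 :> nat).+1 = 2)%N.
Proof.
move=> n_gt1; rewrite (bigD1 (Ordinal (ltnW n_gt1))) //= big1 // => k /andP[_].
move=> /eqP k_ne0; case: eqP => // k0; case: k_ne0; exact: val_inj.
Qed.

Lemma val_ordS n (i : 'I_n) : (ordS i : nat) = if i.+1 == n then 0%N else i.+1.
Proof.
rewrite /=; case: eqP => [->|ne_n]; first exact: modnn.
by rewrite modn_small //; have := ltn_ord i; lia.
Qed.

Section HamiltonianCycle.
Variables (n : nat) (s : 'S_n).

Lemma hc_edges_consecutive i j :
  i != j -> [set s i; s j] \in hc_edges s -> j = ordS i \/ i = ordS j.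
Proof.
move=> + /imsetP[m _ E].
have : s i \in [set s m; s (ordS m)] by rewrite -E set21.
have : s j \in [set s m; s (ordS m)] by rewrite -E set22.
rewrite !inE !(inj_eq perm_inj) => /orP[]/eqP-> /orP[]/eqP->;
  rewrite ?eqxx //; by [left | right].
Qed.

Lemma mem_visited k m : (s m \in visited s k) = (m <= k)%N.
Proof. by rewrite mem_imset //; exact: perm_inj. Qed.

Lemma card_visited k : #|visited s k| = k.+1.
Proof.
rewrite card_imset; last exact: perm_inj.
rewrite -sum1_card (eq_bigl (fun i : 'I_n => i < k.+1)%N) //.
by rewrite (big_ord_narrow (ltn_ord k)) sum1_card card_ord.
Qed.

Lemma card_unvisited k : #|~: visited s k| = (n - k.+1)%N.
Proof. by rewrite cardsCs setCK card_ord card_visited. Qed.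

Lemma card_unvisited_nbrs k :
  (#|[set j in ~: visited s k | [set s k; j] \in hc_edges s]|
     <= (k == 0 :> nat).+1)%N.
Proof.
set N := [set j in _ | _].
have nbr j : j \in N -> j = s (ordS k) \/ k = 0 :> nat /\ j = s (ord_pred k).
  rewrite -(permKV s j) !inE mem_visited -ltnNge => /andP[k_lt E].
  have ne_k : k != (s^-1)%g j by apply: contraTneq k_lt => <-; rewrite ltnn.
  have [->|k_eq] := hc_edges_consecutive ne_k E; [by left | right].
  rewrite k_eq ordSK; split => //.
  move: k_lt; rewrite k_eq val_ordS.
  by case: eqP => // _; rewrite ltnNge leqnSn.
case: eqP => [_ | k_ne0].
  apply: leq_trans (_ : #|[set s (ordS k); s (ord_pred k)]| <= 2)%N.
    apply/subset_leq_card/subsetP => j /nbr[|[_]] ->;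
      by rewrite !inE eqxx ?orbT.
  by rewrite cards2 ltnS leq_b1.
rewrite -(cards1 (s (ordS k))).
by apply/subset_leq_card/subsetP => j /nbr[->|[/k_ne0]] //; rewrite inE.
Qed.

End HamiltonianCycle.

Definition ord_rot n : 'S_n := perm (@ordS_inj n).

Lemma ord_rotX_val n r (i : 'I_n) :
  val ((ord_rot n ^+ r)%g i) = ((i + r) %% n)%N.
Proof.
elim: r => [|r IH]; first by rewrite expg0 perm1 addn0 modn_small.
by rewrite expgSr permM permE /= IH -addn1 modnDml addn1 addnS.
Qed.

Lemma ord_rotX_morph n r : {morph (ord_rot n ^+ r)%g : i / ordS i}.
Proof.
move=> i; rewrite -[ordS i](permE (@ordS_inj n)) -permM -expgS expgSr permM.
by rewrite permE.
Qed.

Lemma ord_rotX_inj n (s : 'S_n) :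
  injective (fun r : 'I_n => (ord_rot n ^+ r * s)%g).
Proof.
move=> r r' /= /mulIg /(congr1 (fun p : 'S_n => val (p r))) /=.
rewrite !ord_rotX_val => /eqP; rewrite eqn_modDl !modn_small // => /eqP.
exact: val_inj.
Qed.

Lemma hc_edges_morph_mul n (p s : 'S_n) :
  {morph p : i / ordS i} -> hc_edges (p * s)%g = hc_edges s.
Proof.
move=> pS; apply/setP => E; apply/imsetP/imsetP => [[i _ ->]|[i _ ->]].
  by exists (p i) => //; rewrite !permM pS.
by exists ((p^-1)%g i) => //; rewrite !permM pS permKV.
Qed.

Lemma PiH_ge0 (R : realFieldType) n (H : {set {set 'I_n}}) i j :
  0 <= PiH R H i j.
Proof.
rewrite /PiH; case: ifP => _ //; case: ifP => _; last by rewrite invr_ge0.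
have [->|n_gt0] := posnP n; first by rewrite invr0 subr0.
by rewrite subr_ge0 invf_le1 ?ltr0n // ler1n.
Qed.

Lemma gen_prob_ge0 (R : realFieldType) n (Pi : 'I_n -> 'I_n -> R) (s : 'S_n) :
  (forall i j, 0 <= Pi i j) -> 0 <= gen_prob Pi s.
Proof.
move=> Pi_ge0; rewrite /gen_prob mulr_ge0 ?invr_ge0 //.
by apply: prodr_ge0 => k _; rewrite divr_ge0 ?sumr_ge0.
Qed.

(* The off-cycle weight (n-k-1)/(n(n-2)) left at step k, relative to the
   cycle weight 1 - 1/n. *)
Definition off_cycle_ratio (R : fieldType) n (k : 'I_n) : R :=
  (n - k.+1)%:R / (n.-1 * (n - 2))%N%:R.

Section GenerationAlongCycle.
Variables (R : realFieldType) (n : nat) (s : 'S_n).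
Hypothesis n_ge3 : (3 <= n)%N.
Local Notation Pi := (PiH R (hc_edges s)).
Local Notation w := (@off_cycle_ratio R n).

Let on_cycle_gt0 : 0 < 1 - n%:R^-1 :> R.
Proof. by rewrite subr_gt0 invf_lt1 ?ltr0n ?ltr1n //; lia. Qed.

Lemma PiH_hc_step (k : 'I_n) :
  (k.+1 < n)%N -> Pi (s k) (s (ordS k)) = 1 - n%:R^-1.
Proof.
move=> k_lt; rewrite /PiH (inj_eq perm_inj) ifN; last first.
  by rewrite -(inj_eq val_inj) /= modn_small // ltn_eqF.
by rewrite ifT //; exact: imset_f.
Qed.

Lemma PiH_unvisited (k j : 'I_n) : j \notin visited s k ->
  Pi (s k) j = if [set s k; j] \in hc_edges s then 1 - n%:R^-1
               else ((n * (n - 2))%N%:R)^-1.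
Proof.
move=> j_new; rewrite /PiH ifN //.
by apply: contraNneq j_new => <-; rewrite mem_visited.
Qed.

Lemma unvisited_weight_le (k : 'I_n) :
  \sum_(j in ~: visited s k) Pi (s k) j <=
  (1 - n%:R^-1) *+ (k == 0 :> nat).+1 + ((n * (n - 2))%N%:R)^-1 *+ (n - k.+1).
Proof.
set c := 1 - _; set e := _^-1.
have e_ge0 : 0 <= e by rewrite invr_ge0.
set N := [set j in ~: visited s k | [set s k; j] \in hc_edges s].
apply: le_trans (_ : \sum_(j in ~: visited s k)
                     ((if [set s k; j] \in hc_edges s then c else 0) + e) <= _).
  apply: ler_sum => j; rewrite inE => /PiH_unvisited ->.
  by case: ifP => _; rewrite ?add0r ?lerDl.
have sum_nbrs :
    \sum_(j in ~: visited s k | [set s k; j] \in hc_edges s) c = c *+ #|N|.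
  by rewrite -sumr_const; apply: eq_bigl => j; rewrite /N inE.
rewrite big_split /= -big_mkcondr {}sum_nbrs sumr_const card_unvisited.
by rewrite lerD2r ler_wpMn2l ?card_unvisited_nbrs // ltW.
Qed.

Lemma off_cycle_ratio_ge0_le1 (k : 'I_n) : 0 <= w k <= 1.
Proof.
have Q_gt0 : 0 < (n.-1 * (n - 2))%N%:R :> R by rewrite ltr0n; nia.
rewrite /off_cycle_ratio divr_ge0 //= ler_pdivrMr // mul1r ler_nat.
have := ltn_ord k; nia.
Qed.

Lemma gen_factor_ge (k : 'I_n) : (k.+1 < n)%N ->
  (1 - w k) / (k == 0 :> nat).+1%:R <=
  Pi (s k) (s (ordS k)) / \sum_(j in ~: visited s k) Pi (s k) j.
Proof.
move=> k_lt; rewrite PiH_hc_step //.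
set c := 1 - n%:R^-1; set D := \sum_(j in _) _; set t : R := (_).+1%:R.
have Q_gt0 : 0 < (n.-1 * (n - 2))%N%:R :> R by rewrite ltr0n; nia.
have off_cycleE : ((n * (n - 2))%N%:R)^-1 = c / (n.-1 * (n - 2))%N%:R.
  rewrite /c !natrM -subn1 !natrB; try lia.
  have n_ge3R : 3 <= n%:R :> R by rewrite (ler_nat R 3 n).
  by field; rewrite !gt_eqF //; lra.
have D_le : D <= c * (t + w k).
  have -> : c * (t + w k) =
            c *+ (k == 0 :> nat).+1 + ((n * (n - 2))%N%:R)^-1 *+ (n - k.+1).
    rewrite off_cycleE -[c *+ _]mulr_natr -[_ *+ (n - k.+1)]mulr_natr.
    by rewrite /off_cycle_ratio /t; ring.
  exact: unvisited_weight_le.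
have c_le : c <= D.
  have k1_new : s (ordS k) \in ~: visited s k.
    by rewrite inE mem_visited -ltnNge val_ordS ltn_eqF.
  rewrite /D (bigD1 _ k1_new) /= PiH_hc_step // lerDl.
  by apply: sumr_ge0 => j _; exact: PiH_ge0.
have t_ge1 : 1 <= t by rewrite ler1n.
have /andP[w_ge0 w_le1] := off_cycle_ratio_ge0_le1 k.
have D_gt0 : 0 < D := lt_le_trans on_cycle_gt0 c_le.
rewrite ler_pdivrMr ?(lt_le_trans ltr01) // mulrAC ler_pdivlMr //.
(* (1 - w) D <= (1 - w) c (t + w) = c t - c w (t + w - 1) *)
have : 0 <= c * w k * (t + w k - 1).
  by apply: mulr_ge0; [exact: mulr_ge0 (ltW on_cycle_gt0) w_ge0 | lra].
have : 0 <= (1 - w k) * (c * (t + w k) - D) by rewrite mulr_ge0 //; lra.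
nra.
Qed.

End GenerationAlongCycle.

Lemma sum_off_cycle_ratio_le (R : realFieldType) n : (8 <= n)%N ->
  \sum_(k < n | (k.+1 < n)%N) off_cycle_ratio R k <= 2 / 3.
Proof.
move=> n_ge8; have Q_gt0 : 0 < (n.-1 * (n - 2))%N%:R :> R by rewrite ltr0n; nia.
rewrite -mulr_suml -natr_sum sum_ord_subS ler_pdivrMr // mulrAC ler_pdivlMr //.
by rewrite -!natrM ler_nat bin2; nia.
Qed.

Lemma gen_prob_hc_ge (R : realFieldType) n (s : 'S_n) : (8 <= n)%N ->
  n%:R^-1 / 6 <= gen_prob (PiH R (hc_edges s)) s.
Proof.
move=> n_ge8; have n_ge3 : (3 <= n)%N by lia.
rewrite /gen_prob ler_pM2l ?invr_gt0 ?ltr0n; last lia.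
have w01 := @off_cycle_ratio_ge0_le1 R n n_ge3.
have prod_ge : 3^-1 <= \prod_(k < n | (k.+1 < n)%N) (1 - off_cycle_ratio R k).
  apply: le_trans _ (prod_1subr_ge _ (fun k _ => w01 k)).
  by have := sum_off_cycle_ratio_le R n_ge8; lra.
apply: le_trans (_ : \prod_(k < n | (k.+1 < n)%N)
                    ((1 - off_cycle_ratio R k) / (k == 0 :> nat).+1%:R) <= _).
  by rewrite prodf_div -natr_prod prod_ord_first_double; [lra | lia].
apply: ler_prod => k k_lt; rewrite gen_factor_ge // divr_ge0 // subr_ge0.
by case/andP: (w01 k).
Qed.

Lemma good_prob_ge_sum (R : realFieldType) n (d : {set 'I_n} -> R)
    (H : {set {set 'I_n}}) (S : {set 'S_n}) :
  {in S, forall s, cost d (hc_edges s) <= cost d H} ->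
  \sum_(s in S) gen_prob (PiH R H) s <= good_prob d H.
Proof.
move=> S_good; rewrite /good_prob big_mkcond [X in _ <= X]big_mkcond /=.
apply: ler_sum => s _; case: ifP => [/S_good -> //|_].
by case: ifP => _ //; apply: gen_prob_ge0 => i j; exact: PiH_ge0.
Qed.

Theorem claim2 (R : realFieldType) :
  exists c : R, 0 < c /\
  exists N : nat, forall n : nat, (4 <= n)%N -> (N <= n)%N ->
    forall (d : {set 'I_n} -> R) (H : {set {set 'I_n}}),
      is_hcycle H -> c <= good_prob d H.
Proof.
exists 6^-1; split; first by rewrite invr_gt0 ltr0n.
exists 8%N => n _ n_ge8 d _ [s ->].
pose rot r := (ord_rot n ^+ r * s)%g.
have rot_cycle r : hc_edges (rot r) = hc_edges s.
  by apply: hc_edges_morph_mul; exact: ord_rotX_morph.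
apply: le_trans _ (good_prob_ge_sum (S := [set rot r | r : 'I_n]) _);
  last by move=> _ /imsetP[r _ ->]; rewrite rot_cycle.
rewrite big_imset /=; last by move=> r r' _ _; apply: ord_rotX_inj.
have rot_ge r : n%:R^-1 / 6 <= gen_prob (PiH R (hc_edges s)) (rot r).
  by rewrite -(rot_cycle r); exact: gen_prob_hc_ge.
apply: le_trans _ (ler_sum _ (fun r (_ : r \in 'I_n) => rot_ge r)).
rewrite sumr_const card_ord -[_ *+ n]mulr_natr mulrAC mulVf ?mul1r //.
by rewrite pnatr_eq0; lia.
Qed.
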